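(* Let $A\in M_n(\mathbb{FT})$ and let $G$ be a unit of $M_n(\mathbb{T})$ with $G\otimes A=A\otimes G$. Then $G$ has exactly one eigenvalue.
   Context: $\mathbb{FT}$ is $\mathbb{R}$ with $a\oplus b=\max(a,b)$, $a\otimes b=a+b$; $\mathbb{T}=\mathbb{R}\cup\{-\infty\}$ with the obvious extensions. $M_n(\mathbb{FT})\subseteq M_n(\mathbb{T})$ are the $n\times n$ matrices with entries in these, multiplied by $(A\otimes B)_{i,j}=\bigoplus_k A_{i,k}\otimes B_{k,j}$. $M_n(\mathbb{T})$ is a monoid (identity: $0$ on diagonal, $-\infty$ elsewhere); its units are the matrices with exactly one entry different from $-\infty$ in each row and each column. A real number $\lambda$ is an eigenvalue of $G\in M_n(\mathbb{T})$ if $G\otimes x=\lambda\otimes x$ (i.e. $(G\otimes x)_i=\lambda+x_i$ for all $i$) for some $x\in\mathbb{T}^n$ not all of whose entries are $-\infty$. *)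

From HB Require Import structures.
From mathcomp Require Import all_boot all_order all_algebra.
From mathcomp Require Import reals.
Set Implicit Arguments. Unset Strict Implicit. Unset Printing Implicit Defensive.
Import Order.TTheory GRing.Theory Num.Theory.
Local Open Scope ring_scope.

(* The tropical semiring T = R ∪ {-oo}: None stands for -oo, Some r for r. *)
Definition trop (R : realType) := option R.

Definition tadd (R : realType) (a b : trop R) : trop R :=
  match a, b with
  | None, _ => b
  | _, None => a
  | Some x, Some y => Some (Num.max x y)
  end.

Definition tmul (R : realType) (a b : trop R) : trop R :=
  match a, b with
  | Some x, Some y => Some (x + y)
  | _, _ => None
  end.

Definition tmulmx (R : realType) (n : nat) (A B : 'M[trop R]_n) : 'M[trop R]_n :=
  \matrix_(i < n, j < n) \big[@tadd R/None]_(k < n) tmul (A i k) (B k j).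

Definition tmulmxv (R : realType) (n : nat) (A : 'M[trop R]_n) (x : 'I_n -> trop R)
  : 'I_n -> trop R :=
  fun i => \big[@tadd R/None]_(k < n) tmul (A i k) (x k).

Definition tid (R : realType) (n : nat) : 'M[trop R]_n :=
  \matrix_(i < n, j < n) if i == j then Some 0 else None.

(* embedding M_n(FT) into M_n(T) *)
Definition tfin (R : realType) (n : nat) (A : 'M[R]_n) : 'M[trop R]_n :=
  map_mx (@Some R) A.

Definition tunit (R : realType) (n : nat) (G : 'M[trop R]_n) : Prop :=
  exists H : 'M[trop R]_n, tmulmx G H = tid R n /\ tmulmx H G = tid R n.

Definition teigenvalue (R : realType) (n : nat) (G : 'M[trop R]_n) (lam : R) : Prop :=
  exists x : 'I_n -> trop R,
    (exists i, x i <> None) /\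
    forall i, tmulmxv G x i = tmul (Some lam) (x i).

(* A unit of M_n(T) is a monomial matrix: G i k is finite exactly when
   k = s i, for a permutation s, with G i (s i) = d i.  Hence
   (G x)_i = d i + x (s i), and commutation with a finite A reads
   d i + A (s i) (s j) = A i j + d j.  Iterating this m times, where s^m = id,
   shows that the total weight of d along m steps of s is the same constant c
   from every starting point.  An eigenvector x with eigenvalue lam, followed
   m steps along s from a finite entry, gives m lam = c, so lam = c / m; and
   averaging the partial weights along s produces an eigenvector for c / m. *)
From HB Require Import structures.
From mathcomp Require Import all_boot all_order all_algebra all_fingroup.
From mathcomp Require Import reals ring lra.
Set Implicit Arguments. Unset Strict Implicit. Unset Printing Implicit Defensive.
Import Order.TTheory GRing.Theory Num.Theory.
Local Open Scope ring_scope.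

Section TropicalSums.
Variable R : realType.

Lemma taddA : associative (@tadd R).
Proof. by case=> [a|] [b|] [c|] //=; rewrite maxA. Qed.

Lemma taddC : commutative (@tadd R).
Proof. by case=> [a|] [b|] //=; rewrite maxC. Qed.

Lemma tadd0 : left_id None (@tadd R).
Proof. by case. Qed.

HB.instance Definition _ :=
  Monoid.isComLaw.Build (trop R) None (@tadd R) taddA taddC tadd0.

Lemma tmul_neq_None (a b : trop R) :
  (tmul a b <> None) <-> (a <> None /\ b <> None).
Proof. by case: a => [a|]; case: b => [b|]; split=> // -[]. Qed.

Lemma tsum_eq_None (n : nat) (F : 'I_n -> trop R) :
  \big[@tadd R/None]_(k < n) F k = None -> forall k, F k = None.
Proof.
move=> + k; rewrite (bigD1 k) //=.
by case: (F k) (\big[@tadd R/None]_(j | j != k) F j) => [?|] [?|].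
Qed.

Lemma tsum_neq_None (n : nat) (F : 'I_n -> trop R) :
  \big[@tadd R/None]_(k < n) F k <> None -> exists k, F k <> None.
Proof.
move=> hF; case: (pickP (fun k => F k != None)) => [k /eqP|noF]; first by exists k.
by case: hF; rewrite big1 // => k _; apply/eqP/negbFE/noF.
Qed.

Lemma tsum_only (n : nat) (F : 'I_n -> trop R) k0 :
  (forall k, k != k0 -> F k = None) -> \big[@tadd R/None]_(k < n) F k = F k0.
Proof.
move=> hF; rewrite (bigD1 k0) //= big1; first by case: (F k0).
by move=> k /hF.
Qed.

End TropicalSums.

Section TropicalUnits.
Variables (R : realType) (n : nat).

Lemma tmulmx_tid_diag (X Y : 'M[trop R]_n) : tmulmx X Y = tid R n ->
  forall i, exists k, X i k <> None /\ Y k i <> None.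
Proof.
move=> XY i; have : tmulmx X Y i i <> None by rewrite XY mxE eqxx.
by rewrite mxE => /tsum_neq_None [k /tmul_neq_None]; exists k.
Qed.

Lemma tmulmx_tid_offdiag (X Y : 'M[trop R]_n) : tmulmx X Y = tid R n ->
  forall i j k, X i k <> None -> Y k j <> None -> i = j.
Proof.
move=> XY i j k Xik Ykj; apply/eqP/negPn/negP => ij.
have : tmulmx X Y i j = None by rewrite XY mxE (negbTE ij).
by rewrite mxE => /tsum_eq_None /(_ k); apply/tmul_neq_None.
Qed.

Variables G H : 'M[trop R]_n.
Hypotheses (GH : tmulmx G H = tid R n) (HG : tmulmx H G = tid R n).

Lemma tunit_row_uniq i k k' : G i k <> None -> G i k' <> None -> k = k'.
Proof.
move=> Gik Gik'; have [m [Hk'm _]] := tmulmx_tid_diag HG k'.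
have im : i = m by apply: (tmulmx_tid_offdiag GH) Gik' Hk'm.
by rewrite -im in Hk'm; apply/esym; apply: (tmulmx_tid_offdiag HG) Hk'm Gik.
Qed.

Lemma tunit_col_uniq i i' k : G i k <> None -> G i' k <> None -> i = i'.
Proof.
move=> Gik Gi'k; have [m [Gim Hmi]] := tmulmx_tid_diag GH i.
rewrite (tunit_row_uniq Gim Gik) in Hmi.
by apply/esym; apply: (tmulmx_tid_offdiag GH) Gi'k Hmi.
Qed.

Lemma tunit_monomial : exists (s : 'I_n -> 'I_n) (d : 'I_n -> R),
  [/\ injective s, forall i, G i (s i) = Some (d i)
    & forall i k, k != s i -> G i k = None].
Proof.
have rowG i : exists k, G i k <> None.
  by have [k [Gik _]] := tmulmx_tid_diag GH i; exists k.
pose s i := odflt i [pick k | G i k != None].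
have Gs i : G i (s i) <> None.
  rewrite /s; case: pickP => [k /eqP //|noG] /=.
  by have [k /eqP] := rowG i; rewrite noG.
exists s, (fun i => odflt 0 (G i (s i))); split.
- by move=> i i' ss'; apply: (tunit_col_uniq (Gs i)); rewrite ss'.
- by move=> i; case: (G i (s i)) (Gs i).
- move=> i k ks; case Gik: (G i k) => [v|] //; case/eqP: ks.
  by apply: tunit_row_uniq (Gs i); rewrite Gik.
Qed.

End TropicalUnits.

Section MonomialMatrix.
Variables (R : realType) (n : nat) (G : 'M[trop R]_n).
Variables (s : 'I_n -> 'I_n) (d : 'I_n -> R).
Hypotheses (s_inj : injective s) (G_s : forall i, G i (s i) = Some (d i)).
Hypothesis G_None : forall i k, k != s i -> G i k = None.

Lemma tmulmxv_monomial x i : tmulmxv G x i = tmul (Some (d i)) (x (s i)).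
Proof. by rewrite /tmulmxv (tsum_only (k0 := s i)) ?G_s // => k /G_None ->. Qed.

Variable A : 'M[R]_n.
Hypothesis GA : tmulmx G (tfin A) = tmulmx (tfin A) G.

Lemma monomial_commute_fin i j : d i + A (s i) (s j) = A i j + d j.
Proof.
have := congr1 (fun M : 'M[trop R]_n => M i (s j)) GA.
rewrite !mxE (tsum_only (k0 := s i)); last by move=> k /G_None ->.
rewrite (tsum_only (k0 := j)); last first.
  move=> k kj; rewrite G_None; first by case: (tfin A i k).
  by apply: contra kj => /eqP /s_inj ->.
by rewrite G_s /tfin !mxE G_s => -[].
Qed.

Definition walk_weight k i := \sum_(l < k) d (iter l s i).

Lemma walk_weight0 i : walk_weight 0 i = 0.
Proof. by rewrite /walk_weight big_ord0. Qed.

Lemma walk_weightSr k i : walk_weight k.+1 i = walk_weight k i + d (iter k s i).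
Proof. by rewrite /walk_weight big_ord_recr. Qed.

Lemma walk_weightSl k i : walk_weight k.+1 i = d i + walk_weight k (s i).
Proof.
by rewrite /walk_weight big_ord_recl; congr (_ + _); apply: eq_bigr => l _; rewrite iterSr.
Qed.

Lemma commute_fin_iter k i j :
  A (iter k s i) (iter k s j) = A i j + walk_weight k j - walk_weight k i.
Proof.
elim: k i j => [|k IH] i j; first by rewrite !walk_weight0; ring.
have := monomial_commute_fin (iter k s i) (iter k s j).
by rewrite !iterS !walk_weightSr IH; lra.
Qed.

Lemma eigenvector_iter lam x i v :
  (forall i, tmulmxv G x i = tmul (Some lam) (x i)) -> x i = Some v ->
  forall k, x (iter k s i) = Some (v + k%:R * lam - walk_weight k i).
Proof.
move=> eig xi; elim=> [|k IH]; first by rewrite walk_weight0 xi; congr Some; ring.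
have := eig (iter k s i); rewrite tmulmxv_monomial IH iterS.
case: (x (s (iter k s i))) => [u|] //= [] e.
by rewrite walk_weightSr -natr1; congr Some; lra.
Qed.

Variable m : nat.
Hypotheses (m_gt0 : (0 < m)%N) (iter_m : forall i, iter m s i = i).

Lemma walk_weight_period_const i j : walk_weight m i = walk_weight m j.
Proof. by have := commute_fin_iter m i j; rewrite !iter_m; lra. Qed.

Lemma natr_period_neq0 : (m%:R : R) != 0.
Proof. by rewrite pnatr_eq0 -lt0n. Qed.

Lemma monomial_eigenvalue_eq lam i0 :
  teigenvalue G lam -> lam = walk_weight m i0 / m%:R.
Proof.
move=> [x [[j xj] eig]]; case xjv: (x j) xj => [v|] // _.
have := eigenvector_iter eig xjv m; rewrite iter_m xjv => -[] e.
rewrite (walk_weight_period_const i0 j).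
by apply: (mulIf natr_period_neq0); rewrite mulfVK ?natr_period_neq0 //; lra.
Qed.

Lemma monomial_eigenvalue_mean i0 : teigenvalue G (walk_weight m i0 / m%:R).
Proof.
pose X i := \sum_(k < m) walk_weight k i.
have X_s i : X (s i) + m%:R * d i = X i + walk_weight m i.
  rewrite -[RHS](big_ord_recr m (fun k : 'I_m.+1 => walk_weight k i)) /=.
  rewrite big_ord_recl walk_weight0 add0r.
  under eq_bigr => k _ do rewrite walk_weightSl.
  by rewrite big_split /= sumr_const card_ord addrC mulr_natl.
exists (fun i => Some (X i / m%:R)); split; first by exists i0.
move=> i; rewrite tmulmxv_monomial /=; congr Some.
move: (X_s i); rewrite (walk_weight_period_const i i0) => e.
by apply: (mulIf natr_period_neq0); rewrite !mulrDl !mulfVK ?natr_period_neq0 //; lra.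
Qed.

End MonomialMatrix.

Lemma injective_iter_period (T : finType) (s : T -> T) : injective s ->
  exists2 m, (0 < m)%N & forall x, iter m s x = x.
Proof.
move=> s_inj; pose p := perm s_inj; exists #[p]%g; first exact: order_gt0.
move=> x; have := permX p x #[p]%g; rewrite expg_order perm1 => {2}->.
by apply: eq_iter => y; rewrite permE.
Qed.

Theorem lemma7p6 (R : realType) (n : nat) (hn : (0 < n)%N)
  (A : 'M[R]_n) (G : 'M[trop R]_n) :
  tunit G ->
  tmulmx G (tfin A) = tmulmx (tfin A) G ->
  exists! lam : R, teigenvalue G lam.
Proof.
move=> [H [GH HG]] GA.
have [s [d [s_inj G_s G_None]]] := tunit_monomial GH HG.
have [m m_gt0 iter_m] := injective_iter_period s_inj.
pose i0 := Ordinal hn.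
exists (walk_weight s d m i0 / m%:R); split.
  exact: (monomial_eigenvalue_mean s_inj G_s G_None GA m_gt0 iter_m).
by move=> lam /(monomial_eigenvalue_eq s_inj G_s G_None GA m_gt0 iter_m i0) ->.
Qed.
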